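(* Let $s\in(0,1)$, $N>2s$, $1<p<\frac{N+2s}{N-2s}$, $0<a\in L^\infty(\mathbb R^N)$, and let $f\in H^{-s}(\mathbb R^N)$ be a nonnegative functional with $f\not\equiv0$. Let $C_p:=(p\|a\|_{L^\infty})^{-\frac1{p-1}}\frac{p-1}{p}$ and assume $$\inf_{u\in H^s(\mathbb R^N),\ \|u\|_{L^{p+1}(\mathbb R^N)}=1}\Big\{C_p\|u\|_{H^s}^{\frac{2p}{p-1}}-\langle f,u\rangle\Big\}>0.$$ Then $c_0<c_1$, where $c_0:=\inf_{U_1}I_{a,f}$ and $c_1:=\inf_U I_{a,f}$.
   Context: $\|u\|_{H^s}^2=\int_{\mathbb R^N}|u|^2+\iint_{\mathbb R^{2N}}\frac{|u(x)-u(y)|^2}{|x-y|^{N+2s}}dx\,dy$; $\langle\cdot,\cdot\rangle$ is the $H^{-s}$–$H^s$ duality; $f$ nonnegative means $\langle f,u\rangle\ge0$ for all nonnegative $u\in H^s$. $I_{a,f}(u)=\frac12\|u\|_{H^s}^2-\frac1{p+1}\int_{\mathbb R^N}a(x)u_+^{p+1}dx-\langle f,u\rangle$, $u_+=\max\{u,0\}$. With $g(u):=\|u\|_{H^s}^2-p\|a\|_{L^\infty}\|u\|_{L^{p+1}}^{p+1}$: $U_1:=\{u\in H^s: u=0\text{ or }g(u)>0\}$ and $U:=\{u\in H^s\setminus\{0\}: g(u)=0\}$. *)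

From HB Require Import structures.
From mathcomp Require Import all_boot all_order all_algebra.
From mathcomp Require Import all_classical all_reals all_analysis.
Set Implicit Arguments. Unset Strict Implicit. Unset Printing Implicit Defensive.
Import Order.TTheory GRing.Theory Num.Theory.
Import numFieldNormedType.Exports.
Local Open Scope classical_set_scope.
Local Open Scope ring_scope.

Section FracSobolev.
Context {R : realType} (N : nat).

Definition pt := N.-tuple R.

Definition box (a b : pt) : set pt :=
  [set x | forall i : 'I_N, tnth a i <= tnth x i < tnth b i].
Definition box_vol (a b : pt) : R := \prod_(i < N) (tnth b i - tnth a i).

(* N-dimensional Lebesgue (outer) measure: infimum of the total volume of
   countable covers by boxes. On measurable sets this is Lebesgue measure. *)
Definition lebN (A : set pt) : \bar R :=
  ereal_inf [set z : \bar R | exists a b : nat -> pt,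
    [/\ (forall k (i : 'I_N), tnth (a k) i <= tnth (b k) i),
        A `<=` \bigcup_k box (a k) (b k) &
        z = (\sum_(k <oo) (box_vol (a k) (b k))%:E)%E]].

Definition edist (x y : pt) : R :=
  Num.sqrt (\sum_(i < N) (tnth x i - tnth y i) ^+ 2).

Variable s : R.

Definition Hs_norm2e (u : pt -> R) : \bar R :=
  ((\int[lebN]_x ((u x) ^+ 2)%:E) +
   (\int[lebN]_x \int[lebN]_y
      (((u x - u y) ^+ 2) / (edist x y `^ (N%:R + 2 * s)))%:E))%E.

Definition in_Hs (u : pt -> R) : Prop :=
  measurable_fun setT u /\ (Hs_norm2e u < +oo)%E.

Definition Hs_norm2 (u : pt -> R) : R := fine (Hs_norm2e u).

Definition Lq_pow (q : R) (u : pt -> R) : R :=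
  fine (\int[lebN]_x ((`|u x| `^ q))%:E)%E.

Definition ess_supN (a : pt -> R) : \bar R :=
  ereal_inf [set y : \bar R | exists A, [/\ measurable A, lebN A = 0%E &
     [set x | (y < (a x)%:E)%E] `<=` A]].

Definition Linfty_norm (a : pt -> R) : R := fine (ess_supN a).

(* f in H^{-s}: a bounded linear functional on H^s; <f,u> = f u *)
Definition in_Hminus_s (f : (pt -> R) -> R) : Prop :=
  [/\ (forall u v, in_Hs u -> in_Hs v -> f (u \+ v) = f u + f v),
      (forall (c : R) u, in_Hs u -> f (fun x => c * u x) = c * f u) &
      exists C : R, forall u, in_Hs u -> `|f u| <= C * Num.sqrt (Hs_norm2 u)].

Definition nonneg_functional (f : (pt -> R) -> R) : Prop :=
  forall u, in_Hs u -> (forall x, 0 <= u x) -> 0 <= f u.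

Variables (p : R) (a : pt -> R) (f : (pt -> R) -> R).

Definition I_af (u : pt -> R) : R :=
  2^-1 * Hs_norm2 u
  - (p + 1)^-1 * fine (\int[lebN]_x (a x * (Num.max (u x) 0) `^ (p + 1))%:E)%E
  - f u.

Definition g_fun (u : pt -> R) : R :=
  Hs_norm2 u - p * Linfty_norm a * Lq_pow (p + 1) u.

(* u = 0 in H^s means ||u||_{H^s} = 0 *)
Definition U1 : set (pt -> R) :=
  [set u | in_Hs u /\ (Hs_norm2 u = 0 \/ 0 < g_fun u)].
Definition U0 : set (pt -> R) :=
  [set u | [/\ in_Hs u, Hs_norm2 u != 0 & g_fun u = 0]].

Definition c0 : \bar R := ereal_inf [set (I_af u)%:E | u in U1].
Definition c1 : \bar R := ereal_inf [set (I_af u)%:E | u in U0].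

Definition Cp : R :=
  (p * Linfty_norm a) `^ (- (p - 1)^-1) * ((p - 1) / p).

Definition hyp_inf : \bar R :=
  ereal_inf [set (Cp * (Hs_norm2 u) `^ (p / (p - 1)) - f u)%:E
            | u in [set u | in_Hs u /\ Lq_pow (p + 1) u = 1]].

End FracSobolev.

(* For [c > 0] the quantities [I_af], [g_fun] and the constraint of [hyp_inf]
   at [c u] are explicit in [c], [||u||^2], [\int |u|^(p+1)],
   [\int a u_+^(p+1)] and [<f,u>], so the proof reduces to inequalities for
   the real function [energy] along rays.  Small multiples of some [w] with
   [<f,w> > 0] lie in [U1] and have negative energy, hence [c0 < 0].  On [U]
   we have [||u||^2 = p L \int |u|^(p+1)] with [L = ||a||_oo], so
   [p \int a u_+^(p+1) <= ||u||^2]: [I_af] is coercive and bounded below on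
   [U].  Normalising [u] in [L^(p+1)] and using [hyp_inf > 0] gives
   [(p-1)/p ||u||^2 - <f,u> >= d t] with [t = ||u||_(p+1)].  If [I_af u < 0],
   then [||u||] is bounded and [(1 - s) u] with [s ~ d t / ||u||^2] lies in
   [U1] and has energy smaller by a fixed [g > 0]; otherwise
   [I_af u >= 0 > c0].  Hence [c1 >= min (c0 + g) 0 > c0]. *)

From Pilot Require Import Defs.
From HB Require Import structures.
From mathcomp Require Import all_boot all_order all_algebra.
From mathcomp Require Import all_classical all_reals all_analysis.
From mathcomp Require Import ring lra.
Import Order.TTheory GRing.Theory Num.Theory.
Local Open Scope classical_set_scope.
Local Open Scope ring_scope.

Section setfun_integral.
Local Open Scope ereal_scope.
Context {d} {T : measurableType d} {R : realType} {mu : set T -> \bar R}.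
Hypotheses (mu_ge0 : forall A, 0 <= mu A) (mu0 : mu set0 = 0).
Import HBNNSimple.

(* The library's nonnegative integral is a [Let] and its lemmas assume a
   measure; here [mu] is only a nonnegative set function (an outer measure). *)
Definition sup_sintegral (f : T -> \bar R) := ereal_sup [set sintegral mu h |
  h in [set h : {nnsfun T >-> R} | forall x, (h x)%:E <= f x]].

Lemma sintegral_term_ge0 (h : {nnsfun T >-> R}) x :
  0 <= x%:E * mu (h @^-1` [set x]).
Proof.
have [x0|x0] := leP 0%R x; first by rewrite mule_ge0.
rewrite (_ : _ @^-1` _ = set0) ?mu0 ?mule0//.
by apply/seteqP; split => // t /= htx; move: x0; rewrite -htx ltNge fun_ge0.
Qed.

Lemma sintegral_cst0 : sintegral mu (cst 0%R) = 0.
Proof.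
rewrite sintegralET fsbig1// => r _; rewrite preimage_cst.
by case: ifPn => [/[!inE] <-|]; rewrite ?mul0e// mu0 mule0.
Qed.

Lemma sintegral_cstM (k : R) (h : {nnsfun T >-> R}) : (0 < k)%R ->
  sintegral mu (cst k \* h)%R = k%:E * sintegral mu h.
Proof.
move=> k0; rewrite !sintegralET ge0_mule_fsumr; last exact: sintegral_term_ge0.
rewrite (reindex_fsbigT ( *%R k))/=; last first.
  by exists ( *%R k^-1); [apply: mulKf | apply: mulVKf]; rewrite gt_eqF.
apply: eq_fsbigr => x _.
by rewrite preimage_cstM ?gt_eqF// [(_ / k)%R]mulrC mulKf ?gt_eqF// EFinM muleA.
Qed.

Lemma sup_sintegral_ge0 f : (forall x, 0 <= f x) -> 0 <= sup_sintegral f.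
Proof.
move=> f0; apply: le_trans (ereal_sup_ubound _); last by exists nnsfun0.
by rewrite (eq_sintegral (cst 0%R)) ?sintegral_cst0.
Qed.

Lemma ge0_integralTE_setfun f : (forall x, 0 <= f x) ->
  \int[mu]_(x in setT) f x = sup_sintegral f.
Proof.
move=> f0; rewrite /integral patch_setT.
have -> : f^\+ = f by apply/funext => x; rewrite funeposE max_l.
have -> : f^\- = cst 0 by apply/funext => x; rewrite funenegE /= max_r// oppe_le0.
rewrite [X in _ - X](_ : _ = 0) ?sube0//.
apply/eqP; rewrite eq_le sup_sintegral_ge0// andbT.
apply: ge_ereal_sup => _ [h /= h0 <-].
rewrite (eq_sintegral (cst 0%R)) ?sintegral_cst0// => x /=.
by apply/eqP; rewrite eq_le fun_ge0 andbT -lee_fin; exact: h0.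
Qed.

Lemma integral_ge0_setfun f : (forall x, 0 <= f x) ->
  0 <= \int[mu]_(x in setT) f x.
Proof. by move=> f0; rewrite ge0_integralTE_setfun// sup_sintegral_ge0. Qed.

Lemma sup_sintegralZl (k : R) f : (0 < k)%R ->
  sup_sintegral (fun x => k%:E * f x) = k%:E * sup_sintegral f.
Proof.
move=> k0; apply/eqP; rewrite eq_le; apply/andP; split.
- apply: ge_ereal_sup => _ [h /= hf <-].
  have k'0 : (0 <= k^-1)%R by rewrite invr_ge0 ltW.
  pose h' := scale_nnsfun h k'0.
  have -> : sintegral mu h = k%:E * sintegral mu h'.
    rewrite -sintegral_cstM//; apply: eq_sintegral => x /=.
    by rewrite mulrA mulfV ?gt_eqF// mul1r.
  apply: lee_wpmul2l; first by rewrite lee_fin ltW.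
  by apply: ereal_sup_ubound; exists h' => //= x; rewrite EFinM lee_pdivrMl.
- rewrite -lee_pdivlMl//; apply: ge_ereal_sup => _ [h /= hf <-].
  rewrite lee_pdivlMl// -sintegral_cstM//.
  apply: ereal_sup_ubound; exists (scale_nnsfun h (ltW k0)) => //= x.
  by rewrite EFinM; apply: lee_wpmul2l => //; rewrite lee_fin ltW.
Qed.

Lemma ge0_integralZl_setfun (k : R) f : (0 < k)%R -> (forall x, 0 <= f x) ->
  \int[mu]_(x in setT) (k%:E * f x) = k%:E * \int[mu]_(x in setT) f x.
Proof.
move=> k0 f0; rewrite !ge0_integralTE_setfun ?sup_sintegralZl// => x.
by rewrite mule_ge0// lee_fin ltW.
Qed.

Section null_set.
Context {A : set T}.
Hypotheses (mA : measurable A) (A_null : forall B, mu B <= mu (B `\` A)).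

Lemma le_sup_sintegral_off f g : (forall x, 0 <= g x) ->
  (forall x, ~ A x -> f x <= g x) -> sup_sintegral f <= sup_sintegral g.
Proof.
move=> g0 fg; apply: ge_ereal_sup => _ [h /= hf <-].
pose h' := proj_nnsfun h (measurableC mA).
have h'E x : h' x = (if x \in A then 0 else h x)%R.
  rewrite /h' /= /measurable_realfun.mindic indicE; case: (pselect (A x)) => Ax.
    by rewrite (mem_set Ax) memNset ?mulr0//= => /(_ Ax).
  by rewrite (memNset Ax) mem_set ?mulr1.
apply: (@le_trans _ _ (sintegral mu h')); last first.
  apply: ereal_sup_ubound; exists h' => // x; rewrite h'E.
  case: ifPn => xA; first exact: g0.
  by apply: le_trans (hf x) (fg x _) => /mem_set; apply/negP.
have E1 : sintegral mu h = \sum_(x \in range h) x%:E * mu (h @^-1` [set x]).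
  rewrite sintegralET (fsbig_widen (range h) setT)// => x [_ /= Nx].
  rewrite (_ : _ @^-1` _ = set0) ?mu0 ?mule0//.
  by apply/seteqP; split => // t /= htx; apply: Nx; exists t.
have E2 : sintegral mu h' =
    \sum_(x \in range h) x%:E * mu (h @^-1` [set x] `\` A).
  rewrite sintegralET (fsbig_widen (range h) setT)//; last first.
    move=> x [_ /= Nx]; rewrite (_ : _ `\` _ = set0) ?mu0 ?mule0//.
    by apply/seteqP; split => // t /= [htx _]; apply: Nx; exists t.
  apply: eq_fsbigr => x _.
  have [->|x0] := eqVneq x 0%R; first by rewrite !mul0e.
  congr (_ * mu _); apply/seteqP; split => t.
    change (h' t = x -> h t = x /\ ~ A t); rewrite h'E.
    case: ifPn => [_ /esym/eqP|tA ->]; first by rewrite (negPf x0).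
    by split => // At; move: tA; rewrite (mem_set At).
  change (h t = x /\ ~ A t -> h' t = x); rewrite h'E.
  by move=> [<- tA]; rewrite ifN//; apply/negP => /set_mem.
rewrite E1 E2; apply: lee_fsum; first exact: fimfunP.
move=> x [t _ <-]; apply: lee_wpmul2l; last exact: A_null.
by rewrite lee_fin fun_ge0.
Qed.

Lemma le_integral_off f g : (forall x, 0 <= f x) -> (forall x, 0 <= g x) ->
  (forall x, ~ A x -> f x <= g x) ->
  \int[mu]_(x in setT) f x <= \int[mu]_(x in setT) g x.
Proof.
move=> f0 g0 fg; rewrite !ge0_integralTE_setfun//.
exact: le_sup_sintegral_off.
Qed.

End null_set.
End setfun_integral.

Lemma nneseries_interleave_le (R : realType) (u v : nat -> \bar R) :
  (forall k, 0 <= u k)%E -> (forall k, 0 <= v k)%E ->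
  (\sum_(k <oo) (if odd k then v k./2 else u k./2) <=
   \sum_(k <oo) u k + \sum_(k <oo) v k)%E.
Proof.
move=> u0 v0; set w := fun k => if odd k then v k./2 else u k./2.
have w0 k : (0 <= w k)%E by rewrite /w; case: ifP.
have w_nd :=
  ereal_nondecreasing_series (fun n _ _ => w0 n) (P := xpredT) (N := 0%N).
rewrite -nneseriesD// (cvg_lim _ (ereal_nondecreasing_cvgn w_nd))//.
apply: ge_ereal_sup => _ [n _ <-] /=.
have w_double m : (\sum_(0 <= k < m.*2) w k = \sum_(0 <= j < m) (u j + v j))%E.
  elim: m => [|m IH]; first by rewrite !big_geq.
  rewrite doubleS !big_nat_recr //= IH -addeA /w /= odd_double /= doubleK.
  by rewrite -[uphalf _]/((m.*2.+1)./2) (half_bit_double m true).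
apply: (@le_trans _ _ (\sum_(0 <= k < n.*2) w k)%E).
  by apply: w_nd; rewrite -addnn leq_addr.
by rewrite w_double; apply: nneseries_lim_ge => j _ _; exact: adde_ge0.
Qed.

Section lebN.
Local Open Scope ereal_scope.
Context {R : realType} {N : nat}.
Local Notation lebN := (@lebN R N).

Lemma box_vol_ge0 (a b : @pt R N) : (forall i, tnth a i <= tnth b i)%R ->
  (0 <= box_vol a b)%R.
Proof. by move=> ab; apply: prodr_ge0 => i _; rewrite subr_ge0. Qed.

Lemma lebN_ge0 A : 0 <= lebN A.
Proof.
apply: le_ereal_inf_tmp => _ [a [b [ab _ ->]]].
by apply: nneseries_ge0 => k _ _; rewrite lee_fin box_vol_ge0.
Qed.

(* For [N = 0] every box has volume [1] (empty product) and [lebN] is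
   identically [+oo]. *)
Lemma lebN0 : (0 < N)%N -> lebN set0 = 0.
Proof.
move=> N0; apply/eqP; rewrite eq_le lebN_ge0 andbT.
pose o : @pt R N := [tuple 0%R | i < N].
apply: (@le_trans _ _ (\sum_(k <oo) (box_vol o o)%:E)).
  by apply: ereal_inf_lbound; exists (fun=> o), (fun=> o); split.
rewrite eseries0// => i _ _; rewrite /box_vol (eq_bigr (fun=> 0%R)) => [|j _].
  by rewrite prodr_const card_ord expr0n gtn_eqF.
by rewrite subrr.
Qed.

(* Interleave a cover of [B `\` A] with a cover of [A] of volume [< e]. *)
Lemma lebN_setD_null (A : set (@pt R N)) : lebN A = 0 ->
  forall B, lebN B <= lebN (B `\` A).
Proof.
move=> A0 B; apply: le_ereal_inf_tmp => _ [a1 [b1 [ab1 cov1 ->]]].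
apply/lee_addgt0Pr => e e0.
have : lebN A < e%:E by rewrite A0 lte_fin.
case/ereal_inf_lt => _ [a2 [b2 [ab2 cov2 ->]]] lt2.
pose a k := if odd k then a2 k./2 else a1 k./2.
pose b k := if odd k then b2 k./2 else b1 k./2.
apply: (@le_trans _ _ (\sum_(k <oo) (box_vol (a k) (b k))%:E)).
  apply: ereal_inf_lbound; exists a, b; split => //.
    by move=> k i; rewrite /a /b; case: ifP.
  move=> x Bx; have [Ax|nAx] := pselect (A x).
    have [j _ hj] := cov2 x Ax; exists j.*2.+1 => //.
    rewrite /a /b /= odd_double /= -[uphalf _]/((j.*2.+1)./2).
    by rewrite (half_bit_double j true).
  have [j _ hj] := cov1 x (conj Bx nAx); exists j.*2 => //.
  by rewrite /a /b /= odd_double /= doubleK.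
apply: le_trans (leeD (lexx _) (ltW lt2)).
rewrite (@eq_eseriesr _ _ (fun k => if odd k
    then (box_vol (a2 k./2) (b2 k./2))%:E else (box_vol (a1 k./2) (b1 k./2))%:E));
  last by move=> k _; rewrite /a /b; case: ifP.
by apply: nneseries_interleave_le => k; rewrite lee_fin box_vol_ge0.
Qed.

End lebN.

Lemma fine_pEFinM (R : realType) (k : R) (x : \bar R) : 0 < k ->
  fine (k%:E * x)%E = k * fine x.
Proof.
move=> k0; case: x => [r| |] //=.
  by rewrite muleC gt0_mulye ?lte_fin// mulr0.
by rewrite muleC gt0_mulNye ?lte_fin// mulr0.
Qed.

Section functionals.
Context {R : realType} {N : nat}.
Hypothesis N0 : (0 < N)%N.
Local Notation pt := (@pt R N).
Local Notation mu := (@lebN R N).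
Let mu_ge0 := @lebN_ge0 R N.
Let mu0 := @lebN0 R N N0.

Let integral_ge0 (g : pt -> \bar R) :
  (forall x, 0 <= g x)%E -> (0 <= \int[mu]_x g x)%E.
Proof. exact: integral_ge0_setfun. Qed.

Let integralZl (k : R) (g : pt -> \bar R) : 0 < k -> (forall x, 0 <= g x)%E ->
  (\int[mu]_x (k%:E * g x) = k%:E * \int[mu]_x g x)%E.
Proof. exact: ge0_integralZl_setfun. Qed.

Definition nonlinear_part (p : R) (a u : pt -> R) : R :=
  fine (\int[mu]_x (a x * (Num.max (u x) 0) `^ (p + 1))%:E)%E.

Lemma Hs_kernel_ge0 s (u : pt -> R) x y :
  0 <= (u x - u y) ^+ 2 / Defs.edist x y `^ (N%:R + 2 * s).
Proof. by rewrite divr_ge0 ?sqr_ge0 ?powR_ge0. Qed.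

Lemma Hs_norm2e_ge0 s (u : pt -> R) : (0 <= Hs_norm2e s u)%E.
Proof.
rewrite /Hs_norm2e adde_ge0//; apply: integral_ge0 => x.
  by rewrite lee_fin sqr_ge0.
by apply: integral_ge0 => y; rewrite lee_fin Hs_kernel_ge0.
Qed.

Lemma Hs_norm2_ge0 s (u : pt -> R) : 0 <= Hs_norm2 s u.
Proof. by rewrite fine_ge0 ?Hs_norm2e_ge0. Qed.

Lemma Hs_norm2eZ s (u : pt -> R) c : c != 0 ->
  Hs_norm2e s (fun x => c * u x) = ((c ^+ 2)%:E * Hs_norm2e s u)%E.
Proof.
move=> c0; have c20 : 0 < c ^+ 2 by rewrite exprn_even_gt0.
rewrite /Hs_norm2e ge0_muleDr; last 2 first.
- by apply: integral_ge0 => x; rewrite lee_fin sqr_ge0.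
- apply: integral_ge0 => x.
  by apply: integral_ge0 => y; rewrite lee_fin Hs_kernel_ge0.
congr (_ + _)%E.
  rewrite -integralZl//; last by move=> x; rewrite lee_fin sqr_ge0.
  by congr integral; apply/funext => x; rewrite exprMn EFinM.
rewrite -integralZl//; last first.
  by move=> x; apply: integral_ge0 => y; rewrite lee_fin Hs_kernel_ge0.
congr integral; apply/funext => x.
rewrite -integralZl//; last by move=> y; rewrite lee_fin Hs_kernel_ge0.
congr integral; apply/funext => y.
by rewrite -mulrBr exprMn -mulrA EFinM.
Qed.

Lemma Hs_norm2Z s (u : pt -> R) c : c != 0 ->
  Hs_norm2 s (fun x => c * u x) = c ^+ 2 * Hs_norm2 s u.
Proof.
by move=> c0; rewrite /Hs_norm2 Hs_norm2eZ// fine_pEFinM ?exprn_even_gt0.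
Qed.

Lemma in_HsZ s (u : pt -> R) c : c != 0 -> in_Hs s u ->
  in_Hs s (fun x => c * u x).
Proof.
move=> c0 [mu_ hu]; split.
  by apply: measurable_realfun.measurable_funM => //; exact: measurable_cst.
rewrite Hs_norm2eZ//; have := Hs_norm2e_ge0 s u.
by move: hu; case: (Hs_norm2e s u) => // r _ _; rewrite -EFinM ltry.
Qed.

Lemma Lq_pow_ge0 q (u : pt -> R) : 0 <= Lq_pow q u.
Proof.
by rewrite fine_ge0//; apply: integral_ge0 => x; rewrite lee_fin powR_ge0.
Qed.

Lemma Lq_powZ q (u : pt -> R) c : c != 0 ->
  Lq_pow q (fun x => c * u x) = `|c| `^ q * Lq_pow q u.
Proof.
move=> c0; have cq0 : 0 < `|c| `^ q by rewrite powR_gt0 ?normr_gt0.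
rewrite /Lq_pow -fine_pEFinM// -integralZl//.
by congr (fine (integral _ _ _)); apply/funext => x; rewrite normrM powRM// EFinM.
Qed.

Lemma nonlinear_part_ge0 p (a u : pt -> R) : (forall x, 0 <= a x) ->
  0 <= nonlinear_part p a u.
Proof.
move=> a0; rewrite fine_ge0//; apply: integral_ge0 => x.
by rewrite lee_fin mulr_ge0 ?powR_ge0.
Qed.

Lemma nonlinear_partZ p (a u : pt -> R) c : (forall x, 0 <= a x) -> 0 < c ->
  nonlinear_part p a (fun x => c * u x) = c `^ (p + 1) * nonlinear_part p a u.
Proof.
move=> a0 c0; have cp0 : 0 < c `^ (p + 1) by rewrite powR_gt0.
rewrite /nonlinear_part -fine_pEFinM// -integralZl//; last first.
  by move=> x; rewrite lee_fin mulr_ge0 ?powR_ge0.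
congr (fine (integral _ _ _)); apply/funext => x.
rewrite -[X in Num.max _ X](mulr0 c) -maxr_pMr ?(ltW c0)//.
by rewrite powRM ?(ltW c0) ?le_max ?lexx ?orbT// -EFinM mulrCA.
Qed.

Lemma nonlinear_part_le_Lq_pow p (a u : pt -> R) (L : R) :
  0 < p + 1 -> (forall x, 0 <= a x) -> ess_supN a = L%:E -> 0 < L ->
  0 < Lq_pow (p + 1) u -> nonlinear_part p a u <= L * Lq_pow (p + 1) u.
Proof.
move=> p0 a0 esL L0 P0; set P := Lq_pow (p + 1) u.
have IuE : (\int[mu]_x (`|u x| `^ (p + 1))%:E)%E = P%:E.
  have : (0 <= \int[mu]_x (`|u x| `^ (p + 1))%:E)%E.
    by apply: integral_ge0 => x; rewrite lee_fin powR_ge0.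
  move: P0; rewrite /P /Lq_pow.
  by case: (\int[mu]_x _)%E => //=; rewrite ltxx.
have bound y : L < y -> nonlinear_part p a u <= y * P.
  move=> Ly; have y0 : 0 < y by exact: lt_trans Ly.
  have : (ess_supN a < y%:E)%E by rewrite esL lte_fin.
  case/ereal_inf_lt => z [A [mA A0 sA]] zy.
  set Ja := (\int[mu]_x (a x * Num.max (u x) 0 `^ (p + 1))%:E)%E.
  have Ja_le : (Ja <= (y * P)%:E)%E.
    rewrite EFinM -IuE -integralZl//.
    apply: le_integral_off; [exact: mu0|exact: mA|exact: lebN_setD_null| | |].
    - by move=> x; rewrite lee_fin mulr_ge0 ?powR_ge0.
    - by move=> x; rewrite mule_ge0 ?lee_fin ?powR_ge0 ?(ltW y0).
    move=> x nAx; rewrite -EFinM lee_fin.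
    have axy : a x <= y.
      rewrite leNgt; apply/negP => yax; apply: nAx; apply: sA => /=.
      by apply: lt_trans zy _; rewrite lte_fin.
    apply: ler_pM => //; first by rewrite powR_ge0.
    apply: ge0_ler_powR;
      rewrite ?nnegrE ?le_max ?lexx ?orbT ?normr_ge0 ?(ltW p0)//.
    by rewrite ge_max ler_norm normr_ge0.
  have Ja_fin : Ja \is a fin_num.
    rewrite ge0_fin_numE ?(le_lt_trans Ja_le) ?ltry//.
    by apply: integral_ge0 => x; rewrite lee_fin mulr_ge0 ?powR_ge0.
  by rewrite /nonlinear_part -/Ja -lee_fin fineK.
apply/ler_addgt0Pr => e e0.
have := bound (L + e / P); rewrite ltrDl divr_gt0// => /(_ isT)/le_trans; apply.
by rewrite mulrDl divfK // gt_eqF.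
Qed.

End functionals.

Section real_lemmas.
Context {R : realType}.
Implicit Types x t r q : R.

(* [x `^ q = expR (q * ln x) >= 1 + q * ln x] and [ln x >= 1 - x^-1]. *)
Lemma powR_ge1BV x q : 0 < x -> 0 <= q -> 1 - q * (x^-1 - 1) <= x `^ q.
Proof.
move=> x0 q0; apply: le_trans (_ : 1 + q * ln x <= _); last first.
  by rewrite /powR gt_eqF// expR_ge1Dx.
rewrite -mulrN lerD2l ler_wpM2l// lerNl.
have := @le_ln1Dx R (x^-1 - 1); rewrite [1 + _]addrC subrK lnV ?posrE//.
by apply; move: (x0); rewrite -invr_gt0; lra.
Qed.

Lemma powR_invK x r : 0 <= x -> r != 0 -> (x `^ r^-1) `^ r = x.
Proof. by move=> x0 r0; rewrite -powRrM mulVf// powRr1. Qed.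

Lemma powR_split t r : 0 < t -> t `^ (r + 1) = t `^ (r - 1) * t ^+ 2.
Proof.
move=> t0; rewrite -powR_mulrn ?(ltW t0)// -powRD; last first.
  by apply/implyP => _; rewrite gt_eqF.
by congr (_ `^ _); ring.
Qed.

Lemma powR_le1D t r : 0 < t -> 1 <= r -> t `^ (r - 1) <= 1 + t `^ (r + 1).
Proof.
move=> t0 r1; have [t1|t1] := leP t 1.
  apply: le_trans (_ : 1 <= _); last by rewrite lerDl powR_ge0.
  have : t `^ (r - 1) <= 1 `^ (r - 1).
    by rewrite ge0_ler_powR ?nnegrE ?(ltW t0)//; lra.
  by rewrite powR1.
by rewrite ler_wpDl ?powR_ge0// ler_powR ?ltW//; lra.
Qed.

Lemma exists_small_powR r M c : 0 < r -> 0 < c ->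
  exists2 t, 0 < t <= c & t `^ r * M < 1.
Proof.
move=> r0 c0; pose b := (`|M| + 1)^-1.
have b0 : 0 < b by rewrite invr_gt0 ltr_wpDl.
pose t := Num.min c (b `^ r^-1).
have t0 : 0 < t by rewrite lt_min c0 powR_gt0.
exists t; first by rewrite t0 ge_min lexx.
have tb : t `^ r <= b.
  rewrite -[X in _ <= X](powRr1 (ltW b0)) -(mulVf (lt0r_neq0 r0)) powRrM.
  rewrite ge0_ler_powR ?nnegrE ?powR_ge0 ?(ltW r0) ?(ltW t0)//.
  by rewrite ge_min lexx orbT.
apply: le_lt_trans (_ : t `^ r * M <= b * `|M|) _.
  apply: le_trans (_ : t `^ r * `|M| <= _).
    by rewrite ler_wpM2l ?powR_ge0 ?ler_norm.
  by rewrite ler_wpM2r.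
rewrite /b mulrC ltr_pdivrMr ?ltr_wpDl//; lra.
Qed.

Lemma le_quadratic_min (k C r : R) : 0 < k ->
  - (C ^+ 2 / (4 * k)) <= k * r ^+ 2 - C * r.
Proof.
move=> k0; rewrite -subr_ge0.
have -> : k * r ^+ 2 - C * r - - (C ^+ 2 / (4 * k)) = k * (r - C / (2 * k)) ^+ 2.
  by field; rewrite gt_eqF.
by rewrite mulr_ge0 ?sqr_ge0 ?(ltW k0).
Qed.

End real_lemmas.


Definition energy {R : realType} (p Q J F : R) : R :=
  2^-1 * Q - (p + 1)^-1 * J - F.

Section energy.
Context {R : realType} {p : R}.
Local Notation energy := (energy p).

Lemma nonlinear_term_le (Q J : R) : 0 < p -> p * J <= Q ->
  (p + 1)^-1 * J <= (p * (p + 1))^-1 * Q.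
Proof.
move=> p0 JQ; rewrite invfM [p^-1 * _]mulrC -mulrA ler_wpM2l ?invr_ge0//.
  by rewrite addr_ge0 ?(ltW p0).
by rewrite mulrC ler_pdivlMr// mulrC.
Qed.

Lemma energy_coercive : 1 < p -> 0 < 2^-1 - (p * (p + 1))^-1.
Proof.
move=> p1; rewrite subr_gt0 ltf_pV2 ?posrE ?mulr_gt0//; first nra.
all: lra.
Qed.

Lemma energy_ge (Q J F C : R) : 0 < p -> p * J <= Q -> F <= C * Num.sqrt Q ->
  (2^-1 - (p * (p + 1))^-1) * Q - C * Num.sqrt Q <= energy Q J F.
Proof.
by move=> p0 JQ; have := nonlinear_term_le _ _ p0 JQ; rewrite /energy; lra.
Qed.

Lemma energy_decrease (Q J F s : R) : 1 < p -> 0 <= J -> p * J <= Q ->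
  0 <= s <= 2^-1 ->
  s * ((p - 1) / p * Q - F) - 5 / 2 * s ^+ 2 * Q <=
  energy Q J F - energy ((1 - s) ^+ 2 * Q) ((1 - s) `^ (p + 1) * J) ((1 - s) * F).
Proof.
move=> p1 J0 JQ /andP[s0 s2]; have p0 : 0 < p by lra.
have pp : 0 < p + 1 by lra.
have x0 : 0 < 1 - s by lra.
have inv_le : (1 - s)^-1 - 1 <= s + 2 * s ^+ 2.
  have : 1 <= (1 + s + 2 * s ^+ 2) * (1 - s) by nra.
  by rewrite -ler_pdivrMr// mul1r; lra.
have K_le : 1 - (1 - s) `^ (p + 1) <= (p + 1) * (s + 2 * s ^+ 2).
  have := powR_ge1BV _ _ x0 (ltW pp).
  have := ler_wpM2l (ltW pp) inv_le; lra.
pose W := p^-1 * Q.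
have JW : J <= W by rewrite /W mulrC ler_pdivlMr// mulrC.
have Q0 : 0 <= Q by apply: le_trans JQ; rewrite mulr_ge0 ?(ltW p0).
have WQ : W <= Q by rewrite /W ler_piMl// invf_le1// (ltW p1).
have KJ : (p + 1)^-1 * ((1 - (1 - s) `^ (p + 1)) * J) <= (s + 2 * s ^+ 2) * W.
  rewrite ler_pdivrMl// mulrA; apply: le_trans (ler_wpM2r J0 K_le) _.
  by rewrite ler_wpM2l// mulr_ge0 ?(ltW pp)// addr_ge0 ?mulr_ge0 ?sqr_ge0.
have -> : (p - 1) / p * Q = Q - W by rewrite /W; field; rewrite gt_eqF.
have -> : energy Q J F -
    energy ((1 - s) ^+ 2 * Q) ((1 - s) `^ (p + 1) * J) ((1 - s) * F) =
    (s - s ^+ 2 / 2) * Q - (p + 1)^-1 * ((1 - (1 - s) `^ (p + 1)) * J) - s * F.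
  by rewrite /energy; field; rewrite gt_eqF.
have : 0 <= s ^+ 2 * (Q - W) by rewrite mulr_ge0 ?sqr_ge0 ?subr_ge0.
lra.
Qed.

Lemma energy_gap (Q J F w : R) : 1 < p -> 0 < Q -> 0 <= J -> p * J <= Q ->
  0 < w -> w <= (p - 1) / p * Q - F -> energy Q J F < 0 ->
  exists2 c, 0 < c < 1 &
    w ^+ 2 / (10 * Q) <=
    energy Q J F - energy (c ^+ 2 * Q) (c `^ (p + 1) * J) (c * F).
Proof.
move=> p1 Q0 J0 JQ w0 wF neg; have p0 : 0 < p by lra.
have pp_ge2 : (p * (p + 1))^-1 <= 2^-1.
  by rewrite lef_pV2 ?posrE ?mulr_gt0//; nra.
have F0 : 0 < F.
  have := nonlinear_term_le _ _ p0 JQ; have := ler_wpM2r (ltW Q0) pp_ge2.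
  by move: neg; rewrite /energy; lra.
have wQ : w < Q.
  have : (p - 1) / p * Q = Q - Q / p by field; rewrite gt_eqF.
  have : 0 <= Q / p by rewrite divr_ge0 ?(ltW Q0) ?(ltW p0).
  lra.
pose s := w / (5 * Q).
have s0 : 0 < s by rewrite divr_gt0// mulr_gt0.
have s5 : s <= 5^-1.
  rewrite /s invfM mulrA ler_pdivrMr// [_ * Q]mulrC ler_wpM2r ?(ltW Q0)//.
  lra.
exists (1 - s); first lra.
apply: le_trans (energy_decrease _ _ _ _ p1 J0 JQ _).
  2: by apply/andP; split; lra.
have : s * w <= s * ((p - 1) / p * Q - F) by rewrite ler_wpM2l ?(ltW s0).
have : s * w - 5 / 2 * s ^+ 2 * Q = w ^+ 2 / (10 * Q).
  by rewrite /s; field; rewrite gt_eqF.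
lra.
Qed.

Lemma Cp_homogeneity (A t : R) : 1 < p -> 0 < A -> 0 < t ->
  t * (A `^ (- (p - 1)^-1) * ((p - 1) / p) * (A * t `^ (p - 1)) `^ (p / (p - 1)))
  = (p - 1) / p * (A * t `^ (p + 1)).
Proof.
move=> p1 A0 t0; have p10 : p - 1 != 0 by rewrite subr_eq0 gt_eqF.
have e : (p - 1) * (p / (p - 1)) = p by rewrite mulrC divfK.
rewrite powRM ?(ltW A0) ?powR_ge0// -powRrM e.
have eA : A `^ (- (p - 1)^-1) * A `^ (p / (p - 1)) = A.
  rewrite -powRD ?(gt_eqF A0) ?implybT//.
  by rewrite (_ : _ + _ = 1) ?powRr1 ?(ltW A0)//; field.
have et : t `^ p * t = t `^ (p + 1).
  by rewrite powRD ?powRr1 ?(ltW t0)// (gt_eqF t0) implybT.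
transitivity
  (A `^ (- (p - 1)^-1) * A `^ (p / (p - 1)) * (t `^ p * t) * ((p - 1) / p)).
  by ring.
by rewrite eA et mulrC.
Qed.

End energy.

Lemma ereal_inf_gt0 {T : Type} {R : realType} (S : set T) (g : T -> R) :
  (0 < ereal_inf [set (g x)%:E | x in S])%E ->
  exists2 d, 0 < d & forall x, S x -> d <= g x.
Proof.
have lb x : S x -> (ereal_inf [set (g x)%:E | x in S] <= (g x)%:E)%E.
  by move=> Sx; apply: ereal_inf_lbound; exists x.
case E : ereal_inf lb => [r| |] // lb r0.
  by exists r => // x /lb; rewrite lee_fin.
by exists 1 => // x /lb; rewrite leye_eq.
Qed.

Section lemma3p2.
Context {R : realType} {N : nat} {s p : R} {a : @pt R N -> R}.
Context {f : (@pt R N -> R) -> R} {C : R}.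
Hypotheses (N0 : (0 < N)%N) (p1 : 1 < p) (a_ge0 : forall x, 0 <= a x).
Hypothesis a_bnd : (ess_supN a < +oo)%E.
Hypothesis fZ : forall c u, in_Hs s u -> f (fun x => c * u x) = c * f u.
Hypothesis f_bnd :
  forall u, in_Hs s u -> `|f u| <= C * Num.sqrt (Hs_norm2 s u).

Local Notation Q := (Hs_norm2 s).
Local Notation P := (Lq_pow (p + 1)).
Local Notation J := (nonlinear_part p a).
Local Notation L := (Linfty_norm a).
Local Notation I := (I_af s p a f).

Let p0 : 0 < p. Proof. by apply: lt_trans p1. Qed.

Lemma I_af_energy u : I u = energy p (Q u) (J u) (f u).
Proof. by []. Qed.

Lemma I_afZ u c : in_Hs s u -> 0 < c ->
  I (fun x => c * u x) = energy p (c ^+ 2 * Q u) (c `^ (p + 1) * J u) (c * f u).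
Proof.
by move=> uH c0; rewrite I_af_energy Hs_norm2Z ?gt_eqF// nonlinear_partZ// fZ.
Qed.

Lemma g_funZ u c : 0 < c ->
  g_fun s p a (fun x => c * u x) = c ^+ 2 * Q u - p * L * (c `^ (p + 1) * P u).
Proof.
by move=> c0; rewrite /g_fun Hs_norm2Z ?gt_eqF// Lq_powZ ?gt_eqF// gtr0_norm.
Qed.

Lemma f_le u : in_Hs s u -> f u <= C * Num.sqrt (Q u).
Proof. by move=> uH; apply: le_trans (ler_norm _) (f_bnd _ uH). Qed.

Lemma c0_le_I u : U1 s p a u -> (c0 s p a f <= (I u)%:E)%E.
Proof. by move=> uU; apply: ereal_inf_lbound; exists u. Qed.

Lemma exists_f_gt0 : (exists u, in_Hs s u /\ f u != 0) ->
  exists2 w, in_Hs s w & 0 < f w.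
Proof.
move=> [u [uH fu0]]; have [fu_gt0|fu_le0] := ltP 0 (f u); first by exists u.
exists (fun x => -1 * u x); first by apply: in_HsZ; rewrite ?oppr_eq0 ?oner_eq0.
by rewrite fZ// mulN1r oppr_gt0 lt_neqAle fu0.
Qed.

Lemma c0_lt0 : (exists u, in_Hs s u /\ f u != 0) -> (c0 s p a f < 0)%E.
Proof.
move=> /exists_f_gt0[w wH Fw0].
have Qw0 : 0 < Q w.
  rewrite lt_neqAle Hs_norm2_ge0// andbT; apply/negP => /eqP Q0.
  move: (f_bnd _ wH); rewrite -Q0 sqrtr0 mulr0 normr_le0 => /eqP F0.
  by move: Fw0; rewrite F0 ltxx.
have [t /andP[t0 tF] tM] : exists2 t, 0 < t <= f w / Q w &
    t `^ (p - 1) * (p * L * P w / Q w) < 1.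
  by apply: exists_small_powR; rewrite ?divr_gt0//; move: p1; lra.
apply: le_lt_trans (c0_le_I (fun x => t * w x) _) _.
  split; first by apply: in_HsZ; rewrite ?gt_eqF.
  right; rewrite g_funZ// powR_split//.
  have : t `^ (p - 1) * (p * L * P w) < Q w.
    by move: tM; rewrite mulrA ltr_pdivrMr// mul1r.
  have t20 : 0 < t ^+ 2 by rewrite exprn_gt0.
  nra.
rewrite lte_fin I_afZ// /energy.
have : 0 <= (p + 1)^-1 * (t `^ (p + 1) * J w).
  by rewrite !mulr_ge0 ?invr_ge0 ?powR_ge0 ?nonlinear_part_ge0//; move: p1; lra.
have : t * Q w <= f w by rewrite -ler_pdivlMr.
nra.
Qed.

Lemma U0_pos u :
  U0 s p a u -> [/\ 0 < Q u, 0 < P u, 0 < L & Q u = p * L * P u].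
Proof.
case=> _ Qn /eqP; rewrite subr_eq0 => /eqP QP.
have Q0 : 0 < Q u by rewrite lt_neqAle eq_sym Qn Hs_norm2_ge0.
have LP0 : 0 < L * P u by move: Q0; rewrite QP -mulrA pmulr_rgt0.
have P0 := Lq_pow_ge0 N0 (p + 1) u.
have L0 : 0 < L.
  by rewrite ltNge; apply/negP => L0; move: LP0; rewrite ltNge mulr_le0_ge0.
by split=> //; move: LP0; rewrite pmulr_rgt0.
Qed.

Lemma ess_supN_Linfty : 0 < L -> ess_supN a = L%:E.
Proof.
by move: a_bnd; rewrite /Linfty_norm; case: ess_supN => //= _; rewrite ltxx.
Qed.

Lemma U0_nonlinear_le u : U0 s p a u -> p * J u <= Q u.
Proof.
move=> /U0_pos[Q0 P0 L0 ->]; rewrite -mulrA ler_pM2l//.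
apply: nonlinear_part_le_Lq_pow => //; last exact: ess_supN_Linfty.
by move: p1; lra.
Qed.

Lemma U0_scale_U1 u c : U0 s p a u -> 0 < c < 1 -> U1 s p a (fun x => c * u x).
Proof.
move=> uU /andP[c0 c1]; have [Q0 _ _ QP] := U0_pos _ uU.
split; first by case: uU => uH _ _; apply: in_HsZ; rewrite ?gt_eqF.
right; rewrite g_funZ// powR_split//.
have -> : p * L * (c `^ (p - 1) * c ^+ 2 * P u) = c ^+ 2 * c `^ (p - 1) * Q u.
  by rewrite QP; ring.
have cp : c `^ (p - 1) < 1.
  have p10 : 0 < p - 1 by move: p1; lra.
  have c_nn : c \in Num.nneg by rewrite nnegrE ltW.
  have one_nn : (1 : R) \in Num.nneg by rewrite nnegrE.
  by have := gt0_ltr_powR p10 c_nn one_nn c1; rewrite powR1.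
rewrite (_ : _ - _ = c ^+ 2 * Q u * (1 - c `^ (p - 1))); last by ring.
by rewrite !mulr_gt0 ?exprn_gt0 ?subr_gt0.
Qed.

Local Notation kappa := (2^-1 - (p * (p + 1))^-1).
Local Notation lower_bound_on_sphere d := (forall v, in_Hs s v -> P v = 1 ->
  d <= Cp p a * Q v `^ (p / (p - 1)) - f v).

Lemma U0_I_ge u : U0 s p a u -> kappa * Q u - C * Num.sqrt (Q u) <= I u.
Proof.
move=> uU; have uH : in_Hs s u by case: uU.
exact: energy_ge p0 (U0_nonlinear_le _ uU) (f_le _ uH).
Qed.

Lemma U0_I_lbound u : U0 s p a u -> - (C ^+ 2 / (4 * kappa)) <= I u.
Proof.
move=> uU; apply: le_trans (U0_I_ge _ uU).
have := le_quadratic_min _ C (Num.sqrt (Q u)) (energy_coercive p1).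
by rewrite sqr_sqrtr ?Hs_norm2_ge0.
Qed.

Lemma U0_I_lt0_bound u : U0 s p a u -> I u < 0 -> Q u < (C / kappa) ^+ 2.
Proof.
move=> uU Ilt0; have [Q0 _ _ _] := U0_pos _ uU.
have k0 := energy_coercive p1; have r0 : 0 < Num.sqrt (Q u) by rewrite sqrtr_gt0.
have : kappa * Num.sqrt (Q u) < C.
  rewrite -(ltr_pM2r r0) -mulrA -expr2 sqr_sqrtr ?(ltW Q0)//.
  by have := U0_I_ge _ uU; lra.
rewrite -ltr_pdivlMl// mulrC => rC.
rewrite -(sqr_sqrtr (ltW Q0)) ltr_pXn2r ?nnegrE ?sqrtr_ge0//.
exact: le_trans (ltW r0) (ltW rC).
Qed.

Lemma U0_nehari_gap d : lower_bound_on_sphere d ->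
  forall u, U0 s p a u -> d * P u `^ (p + 1)^-1 <= (p - 1) / p * Q u - f u.
Proof.
move=> hd u uU; have [Q0 P0 L0 QP] := U0_pos _ uU.
have uH : in_Hs s u by case: uU.
have pp : 0 < p + 1 by move: p1; lra.
set t := P u `^ (p + 1)^-1; have t0 : 0 < t by rewrite powR_gt0.
have tP : t `^ (p + 1) = P u by rewrite powR_invK ?(ltW P0) ?gt_eqF.
have vP : P (fun x => t^-1 * u x) = 1.
  rewrite Lq_powZ ?invr_eq0 ?gt_eqF// gtr0_norm ?invr_gt0// -tP.
  rewrite -powRM ?invr_ge0 ?(ltW t0)//.
  by rewrite mulVf ?gt_eqF// powR1.
have vH : in_Hs s (fun x => t^-1 * u x).
  by apply: in_HsZ; rewrite ?invr_eq0 ?gt_eqF.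
have := hd _ vH vP.
rewrite Hs_norm2Z ?invr_eq0 ?gt_eqF// fZ// => /(ler_wpM2l (ltW t0)).
rewrite mulrBr [t * (t^-1 * _)]mulrA mulfV ?gt_eqF// mul1r.
have -> : t^-1 ^+ 2 * Q u = p * L * t `^ (p - 1).
  by rewrite QP -tP powR_split//; field; rewrite gt_eqF.
by rewrite /Cp Cp_homogeneity ?mulr_gt0// tP -QP mulrC.
Qed.

Lemma U0_le_root2 u :
  U0 s p a u -> Q u <= (p * L + Q u) * (P u `^ (p + 1)^-1) ^+ 2.
Proof.
move=> uU; have [Q0 P0 L0 QP] := U0_pos _ uU.
set t := P u `^ (p + 1)^-1; have t0 : 0 < t by rewrite powR_gt0.
have tP : t `^ (p + 1) = P u.
  by rewrite powR_invK ?(ltW P0) ?gt_eqF//; move: p1; lra.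
rewrite {1}QP -tP powR_split// mulrA ler_wpM2r ?sqr_ge0//.
apply: le_trans (ler_wpM2l _ (powR_le1D _ _ t0 (ltW p1))) _.
  by rewrite mulr_ge0 ?(ltW p0) ?(ltW L0).
by rewrite mulrDr mulr1 tP QP.
Qed.

Lemma U0_energy_gap d : 0 < d -> lower_bound_on_sphere d ->
  exists2 g, 0 < g & forall u, U0 s p a u -> I u < 0 ->
    exists2 v, U1 s p a v & I v + g <= I u.
Proof.
move=> d0 hd; have [L0|L0] := leP L 0.
  by exists 1 => // u /U0_pos[_ _ L0']; move: L0; rewrite leNgt L0'.
pose A := p * L; have A0 : 0 < A by rewrite mulr_gt0.
pose Qm := (C / kappa) ^+ 2.
have AQm : 0 < A + Qm by apply: lt_le_trans A0 _; rewrite lerDl sqr_ge0.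
exists (d ^+ 2 / (10 * (A + Qm))); first by rewrite divr_gt0 ?exprn_gt0 ?mulr_gt0.
move=> u uU Ilt0; have [Q0 P0 _ _] := U0_pos _ uU.
have uH : in_Hs s u by case: uU.
have QAt := U0_le_root2 _ uU.
set t := P u `^ (p + 1)^-1 in QAt *; have t0 : 0 < t by rewrite powR_gt0.
have [c c01 gain] := energy_gap (Q u) (J u) (f u) (d * t) p1 Q0
  (nonlinear_part_ge0 N0 _ _ _ a_ge0) (U0_nonlinear_le _ uU) (mulr_gt0 d0 t0)
  (U0_nehari_gap _ hd _ uU) Ilt0.
have c0 : 0 < c by case/andP: c01.
exists (fun x => c * u x); first exact: U0_scale_U1.
have QQm := U0_I_lt0_bound _ uU Ilt0.
have : d ^+ 2 / (10 * (A + Qm)) <= (d * t) ^+ 2 / (10 * Q u).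
  have AQ : 0 < A + Q u by rewrite addr_gt0.
  apply: (@le_trans _ _ (d ^+ 2 / (10 * (A + Q u)))).
    rewrite ler_wpM2l ?sqr_ge0// lef_pV2 ?posrE ?mulr_gt0//.
    by rewrite ler_wpM2l// lerD2l ltW.
  rewrite (_ : d ^+ 2 / (10 * (A + Q u)) =
      (d * t) ^+ 2 / (10 * ((A + Q u) * t ^+ 2))).
    rewrite ler_wpM2l ?sqr_ge0// lef_pV2 ?posrE ?mulr_gt0 ?exprn_gt0//.
    by rewrite ler_wpM2l.
  by field; rewrite !gt_eqF ?exprn_gt0.
by move: gain; rewrite I_afZ// I_af_energy; lra.
Qed.

Lemma c0_lt_c1 : (exists u, in_Hs s u /\ f u != 0) -> (0 < hyp_inf s p a f)%E ->
  (c0 s p a f < c1 s p a f)%E.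
Proof.
move=> f_nz /ereal_inf_gt0[d d0 hd].
have [g g0 gap] := U0_energy_gap _ d0 (fun v vH vP => hd v (conj vH vP)).
case E : (c0 s p a f) (c0_lt0 f_nz) => [r| |] // r0.
  apply: (@lt_le_trans _ _ (Num.min (r + g) 0)%:E).
    by rewrite lte_fin lt_min ltrDl g0.
  apply: le_ereal_inf_tmp => _ [u uU <-]; rewrite lee_fin ge_min.
  have [Ilt0|_] := ltP (I u) 0; rewrite ?orbT// orbF.
  have [v vU1 Iv] := gap u uU Ilt0; have := c0_le_I _ vU1; rewrite E lee_fin.
  by move=> rv; lra.
apply: lt_le_trans (ltNyr (- (C ^+ 2 / (4 * kappa)))) _.
by apply: le_ereal_inf_tmp => _ [u uU <-]; rewrite lee_fin U0_I_lbound.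
Qed.
End lemma3p2.

Theorem lemma3p2 (R : realType) (N : nat) (s p : R)
  (a : N.-tuple R -> R) (f : (N.-tuple R -> R) -> R) :
  0 < s -> s < 1 -> 2 * s < N%:R ->
  1 < p -> p < (N%:R + 2 * s) / (N%:R - 2 * s) ->
  measurable_fun setT a -> (forall x, 0 < a x) ->
  (ess_supN a < +oo)%E ->
  in_Hminus_s s f -> nonneg_functional s f ->
  (exists u, in_Hs s u /\ f u != 0) ->
  (0 < hyp_inf s p a f)%E ->
  (c0 s p a f < c1 s p a f)%E.
Proof.
move=> s0 _ sN p1 _ _ a_pos a_bnd [_ fZ [C f_bnd]] _.
have N0 : (0 < N)%N by rewrite -(ltr0n R); apply: lt_trans sN; rewrite mulr_gt0.
exact: c0_lt_c1 N0 p1 (fun x => ltW (a_pos x)) a_bnd fZ f_bnd.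
Qed.
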